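(* Let $f:\mathbb{R}^n\to\mathbb{R}$ be differentiable and pseudo-convex, with $\nabla f$ $L$-Lipschitz continuous, and assume the stationary set $X^*$ is non-empty. Then the sequence $\{x^k\}$ generated by Algorithm 2 (run without stopping, with $\nabla f(x^k)\ne0$ for all $k$) converges to a point of $X^*$.
   Context: Pseudo-convex: $\nabla f$ pseudo-monotone, i.e. $\langle \nabla f(x),y-x\rangle\ge0\Rightarrow\langle\nabla f(y),y-x\rangle\ge0$ for all $x,y$. $X^*=\{x:\nabla f(x)=0\}$. Algorithm 2: parameters $0<\mu<\nu<1$, $0<\underline{h}<1\le\gamma_0^0\le\overline{h}$, $\theta\in(0,1)$, $\tau>1$, $\beta\in\left(\frac{1-\sqrt{1-\nu^2}}{\nu^2},1\right]$, starting point $x^0$. At iteration $k$: for $\gamma>0$ let $z^k(\gamma)=x^k-\gamma\nabla f(x^k)$ and $r_k(\gamma)=\gamma\|\nabla f(z^k(\gamma))-\nabla f(x^k)\|/\|z^k(\gamma)-x^k\|$; starting from $\gamma_0^k$, while $r_k(\gamma_l^k)>\nu$ set $\gamma_{l+1}^k=\gamma_l^k\theta\min\{1,1/r_k(\gamma_l^k)\}$; let $h_k$ be the first $\gamma_l^k$ with $r_k(\gamma_l^k)\le\nu$. Then $z^k=x^k-h_k\nabla f(x^k)$, $x^{k+1}=x^k-h_k\big(\nabla f(x^k)-\beta(\nabla f(x^k)-\nabla f(z^k))\big)$, and $\gamma_0^{k+1}=\mathbf{P}_{[\underline{h},\overline{h}]}(\tau h_k)$ if $r_k(h_k)\le\mu$,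 else $\gamma_0^{k+1}=\mathbf{P}_{[\underline{h},\overline{h}]}(h_k)$, where $\mathbf{P}_{[a,b]}$ is projection onto $[a,b]$. *)

From HB Require Import structures.
From mathcomp Require Import all_boot all_order all_algebra.
From mathcomp Require Import all_classical all_reals all_analysis.
Set Implicit Arguments. Unset Strict Implicit. Unset Printing Implicit Defensive.
Import Order.TTheory GRing.Theory Num.Theory.
Import numFieldNormedType.Exports.
Local Open Scope ring_scope.

Section Defs.
Variables (R : realType) (n : nat).

Definition dotp (u v : 'rV[R]_n) : R := \sum_(i < n) u ord0 i * v ord0 i.
Definition enorm (v : 'rV[R]_n) : R := Num.sqrt (dotp v v).

Definition proj_itv (a b t : R) : R := Num.max a (Num.min b t).

Variable g : 'rV[R]_n -> 'rV[R]_n. (* the gradient map *)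

Definition zpt (x : 'rV[R]_n) (gam : R) : 'rV[R]_n := x - gam *: g x.

Definition rk (x : 'rV[R]_n) (gam : R) : R :=
  gam * enorm (g (zpt x gam) - g x) / enorm (zpt x gam - x).

Fixpoint trial (theta : R) (x : 'rV[R]_n) (gam0 : R) (l : nat) : R :=
  match l with
  | 0 => gam0
  | l'.+1 => let c := trial theta x gam0 l' in
             c * theta * Num.min 1 (1 / rk x c)
  end.

(** One iteration of Algorithm 2: from (x^k, gamma_0^k) to (x^{k+1}, gamma_0^{k+1}).
    h_k is the first trial step with r_k <= nu. *)
Definition alg2_step (mu nu hlo hup theta tau beta : R)
    (xk : 'rV[R]_n) (g0k : R) (xk1 : 'rV[R]_n) (g0k1 : R) : Prop :=
  exists l : nat,
    let hk := trial theta xk g0k l in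
    [/\ rk xk hk <= nu,
        (forall j, (j < l)%N -> nu < rk xk (trial theta xk g0k j)),
        xk1 = xk - hk *: (g xk - beta *: (g xk - g (zpt xk hk))) &
        g0k1 = if rk xk hk <= mu then proj_itv hlo hup (tau * hk)
               else proj_itv hlo hup hk].

End Defs.

From HB Require Import structures.
From mathcomp Require Import all_boot all_order all_algebra.
From mathcomp Require Import all_classical all_reals all_analysis.
From mathcomp Require Import lra ring.
Import Order.TTheory GRing.Theory Num.Theory.
Import numFieldNormedType.Exports.
Local Open Scope classical_set_scope.
Local Open Scope ring_scope.
Set Implicit Arguments. Unset Strict Implicit. Unset Printing Implicit Defensive.

(* Fix a stationary point x*. Pseudo-convexity applied to the pair (x*, y)
   gives <grad f(y), y - x*> >= 0 for every y, in particular at x^k and at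
   z^k; together with r_k(h_k) <= nu this makes each step Fejer monotone:
   |x^{k+1} - x*|^2 <= |x^k - x*|^2 - (2 beta - 1 - beta^2 nu^2) h_k^2 |grad f(x^k)|^2,
   where the constant is positive by the choice of beta, and the backtracking
   keeps h_k >= min (hlo, theta nu / L).  Hence the iterates are bounded and
   grad f(x^k) -> 0, so some cluster point is stationary, and Fejer monotonicity
   with respect to that cluster point forces convergence of the whole sequence. *)

Section Dotp.
Variables (R : realType) (n : nat).
Implicit Types u v w : 'rV[R]_n.

Lemma dotpC u v : dotp u v = dotp v u.
Proof. by apply: eq_bigr => i _; rewrite mulrC. Qed.

Lemma dotpDl u v w : dotp (u + v) w = dotp u w + dotp v w.
Proof. by rewrite /dotp -big_split; apply: eq_bigr => i _; rewrite mxE mulrDl. Qed.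

Lemma dotpZl a u v : dotp (a *: u) v = a * dotp u v.
Proof. by rewrite /dotp mulr_sumr; apply: eq_bigr => i _; rewrite mxE mulrA. Qed.

Lemma dotpNl u v : dotp (- u) v = - dotp u v.
Proof. by rewrite -scaleN1r dotpZl mulN1r. Qed.

Lemma dotpDr u v w : dotp w (u + v) = dotp w u + dotp w v.
Proof. by rewrite dotpC dotpDl !(dotpC w). Qed.

Lemma dotpZr a u v : dotp v (a *: u) = a * dotp v u.
Proof. by rewrite dotpC dotpZl dotpC. Qed.

Lemma dotpNr u v : dotp v (- u) = - dotp v u.
Proof. by rewrite dotpC dotpNl dotpC. Qed.

Lemma dotp0l v : dotp 0 v = 0.
Proof. by rewrite -(scale0r 0) dotpZl mul0r. Qed.

Lemma dotp_ge0 v : 0 <= dotp v v.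
Proof. by apply: sumr_ge0 => i _; rewrite -expr2 sqr_ge0. Qed.

Lemma dotp_eq0 v : (dotp v v == 0) = (v == 0).
Proof.
apply/idP/eqP => [|->]; last by rewrite dotp0l.
rewrite psumr_eq0 => [/allP v0|i _]; last by rewrite -expr2 sqr_ge0.
apply/rowP => i; rewrite mxE; apply/eqP.
by have := v0 i (mem_index_enum i); rewrite mulf_eq0 orbb.
Qed.

Lemma dotp_sqrBC u v : dotp (u - v) (u - v) = dotp (v - u) (v - u).
Proof. by rewrite -opprB dotpNl dotpNr opprK. Qed.

Lemma dotp_sqrD_le u v : dotp (u + v) (u + v) <= 2 * dotp u u + 2 * dotp v v.
Proof.
have := dotp_ge0 (u - v).
rewrite !(dotpDl, dotpDr, dotpNl, dotpNr) (dotpC v u); lra.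
Qed.

Lemma enorm_ge0 v : 0 <= enorm v.
Proof. exact: sqrtr_ge0. Qed.

Lemma enorm_sqr v : enorm v ^+ 2 = dotp v v.
Proof. by rewrite sqr_sqrtr // dotp_ge0. Qed.

Lemma sqr_coord_le_dotp v i : v ord0 i ^+ 2 <= dotp v v.
Proof.
rewrite /dotp (bigD1 i) //= -expr2 lerDl.
by apply: sumr_ge0 => j _; rewrite -expr2 sqr_ge0.
Qed.

(* [`|v|] is the sup norm of matrices; the two lemmas below compare it with
   the Euclidean norm. *)
Lemma dotp_le_normr v : dotp v v <= n%:R * `|v| ^+ 2.
Proof.
have -> : n%:R * `|v| ^+ 2 = \sum_(i < n) `|v| ^+ 2.
  by rewrite sumr_const card_ord mulr_natl.
apply: ler_sum => i _; rewrite -expr2 -real_normK ?num_real //.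
rewrite lerXn2r ?nnegrE ?normr_ge0 //.
by rewrite [leRHS]/Num.norm /= mx_normrE; apply/bigmax_geP; right; exists (ord0, i).
Qed.

Lemma normr_lt_dotp v e : 0 < e -> dotp v v < e ^+ 2 -> `|v| < e.
Proof.
move=> e0 ve; rewrite /Num.norm /= mx_normrE; apply: bigmax_lt => // -[a i] _ /=.
rewrite (ord1 a) -(ltr_pXn2r (_ : 0 < 2)%N) ?nnegrE ?normr_ge0 ?ltW //.
by rewrite real_normK ?num_real //; apply: le_lt_trans ve; apply: sqr_coord_le_dotp.
Qed.

End Dotp.

Definition sqdist (R : realType) n (u v : 'rV[R]_n) : R := dotp (u - v) (u - v).

Lemma sqdist_ge0 (R : realType) n (u v : 'rV[R]_n) : 0 <= sqdist u v.
Proof. exact: dotp_ge0. Qed.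

Lemma sqdist_lipschitz (R : realType) n (g : 'rV[R]_n -> 'rV[R]_n) (L : R) :
  (forall p q, enorm (g p - g q) <= L * enorm (p - q)) ->
  forall p q, sqdist (g p) (g q) <= Num.max L 1 ^+ 2 * sqdist p q.
Proof.
move=> g_lip p q; have L1 : 0 <= Num.max L 1 by rewrite le_max ler01 orbT.
rewrite /sqdist -!enorm_sqr -exprMn lerXn2r ?nnegrE ?mulr_ge0 ?enorm_ge0 //.
by apply: le_trans (g_lip p q) _; rewrite ler_wpM2r ?enorm_ge0 // le_max lexx.
Qed.

Section FejerConvergence.
Variables (R : realType) (n : nat) (g : 'rV[R]_n -> 'rV[R]_n) (K c : R).
Variable x : nat -> 'rV[R]_n.
Hypotheses (K_gt0 : 0 < K) (c_gt0 : 0 < c).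
Hypothesis g_lipschitz : forall a b, sqdist (g a) (g b) <= K * sqdist a b.
Hypothesis sqdist_decrease : forall p, g p = 0 -> forall k,
  sqdist (x k.+1) p + c * dotp (g (x k)) (g (x k)) <= sqdist (x k) p.

Let gsq k := dotp (g (x k)) (g (x k)).

Lemma sqdist_nonincreasing p : g p = 0 ->
  {homo (fun k => sqdist (x k) p) : i j / (i <= j)%N >-> j <= i}.
Proof.
move=> gp; apply/nonincreasing_seqP => k; have := sqdist_decrease gp k.
have : 0 <= c * gsq k by rewrite mulr_ge0 ?dotp_ge0 ?ltW.
rewrite /gsq; lra.
Qed.

Lemma gsq_eventually_lt p : g p = 0 ->
  forall eta, 0 < eta -> exists N, forall k, (N <= k)%N -> gsq k < eta.
Proof.
move=> gp eta eta0; pose u k := sqdist (x k) p.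
have u_dec : {homo u : i j / (i <= j)%N >-> j <= i} := sqdist_nonincreasing gp.
have u_lb : has_lbound (range u) by exists 0 => _ [k _ <-]; exact: sqdist_ge0.
have u_cvg : u @ \oo --> limn u := nonincreasing_is_cvgn u_dec u_lb.
have u_ge := nonincreasing_cvgn_ge u_dec u_cvg.
have ceta0 : 0 < c * eta by rewrite mulr_gt0.
have [N _ uN] := cvgr_dist_lt _ _ u_cvg _ ceta0.
exists N => k Nk; have := uN k Nk; rewrite /= distrC ger0_norm ?subr_ge0 //.
have := sqdist_decrease gp k; have := u_ge k.+1; rewrite /u => u1 dec uk.
by rewrite -(ltr_pM2l c_gt0) /gsq; lra.
Qed.

(* Boundedness comes from Fejer monotonicity w.r.t. [p0]; compactness of a
   box then provides the cluster point. *)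
Lemma exists_cluster_point p0 : g p0 = 0 -> exists p, forall eta, 0 < eta ->
  forall N, exists2 k, (N <= k)%N & sqdist (x k) p < eta.
Proof.
move=> gp0; set M := Num.sqrt (sqdist (x 0%N) p0).
pose side i := `[p0 ord0 i - M, p0 ord0 i + M]%classic.
pose box := [set v : 'rV[R]_n | forall i, side i (v ord0 i)].
have box_compact : compact box by apply: rV_compact => i; exact: segment_compact.
have x_box : (x @ \oo) box.
  exists 0%N => // k _ i; rewrite /side /= in_itv /= -ler_distl -sqrtr_sqr /M ler_sqrt.
    apply: le_trans (sqdist_nonincreasing gp0 (leq0n k)).
    by have := sqr_coord_le_dotp (x k - p0) i; rewrite !mxE.
  exact: sqdist_ge0.
have [p [_ p_clus]] := box_compact (x @ \oo) _ x_box.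
exists p => eta eta0 N.
have n1_gt0 : 0 < n.+1%:R :> R by rewrite ltr0n.
set del := Num.min 1 (eta / n.+1%:R).
have del0 : 0 < del by rewrite lt_min ltr01 divr_gt0.
have x_tail : (x @ \oo) [set y | exists2 k, (N <= k)%N & y = x k].
  by exists N => // k /= Nk; exists k.
have [_ [[k Nk ->]]] := p_clus _ _ x_tail (nbhsx_ballx p del del0).
rewrite -ball_normE /= distrC => xk_near; exists k => //.
apply: le_lt_trans (dotp_le_normr _) _.
have del_sqr : del ^+ 2 <= eta / n.+1%:R.
  have del_le : del <= eta / n.+1%:R by rewrite ge_min lexx orbT.
  by rewrite expr2 (le_trans _ del_le) // ger_pMr // ge_min lexx.
apply: (@le_lt_trans _ _ (n%:R * (eta / n.+1%:R))).
  by rewrite ler_wpM2l // (le_trans _ del_sqr) // lerXn2r ?nnegrE ?normr_ge0 ?ltW.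
by rewrite mulrA ltr_pdivrMr // mulrC ltr_pM2l // ltr_nat.
Qed.

Lemma cluster_point_stationary p p0 : g p0 = 0 ->
  (forall eta, 0 < eta -> forall N, exists2 k, (N <= k)%N & sqdist (x k) p < eta) ->
  g p = 0.
Proof.
move=> gp0 p_clus; apply/eqP; rewrite -dotp_eq0 eq_le dotp_ge0 andbT leNgt.
apply/negP => q0; set q := dotp (g p) (g p) in q0.
have [N gsqN] := gsq_eventually_lt gp0 (divr_gt0 q0 (ltr0n _ 4)).
have [k Nk near_k] := p_clus _ (divr_gt0 q0 (mulr_gt0 (ltr0n _ 4) K_gt0)) N.
have gdist : sqdist (g p) (g (x k)) <= q / 4.
  rewrite /sqdist dotp_sqrBC; apply: le_trans (g_lipschitz _ _) _.
  have -> : q / 4 = K * (q / (4 * K)) by field; rewrite gt_eqF.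
  by rewrite ler_wpM2l ?ltW.
have := dotp_sqrD_le (g (x k)) (g p - g (x k)); rewrite addrC subrK -/q.
have := gsqN k Nk; rewrite /gsq /sqdist in gdist *; lra.
Qed.

Theorem fejer_cvg : (exists p0, g p0 = 0) -> exists p, g p = 0 /\ x @ \oo --> p.
Proof.
move=> [p0 gp0]; have [p p_clus] := exists_cluster_point gp0.
have gp := cluster_point_stationary gp0 p_clus.
exists p; split => //; apply/cvgrPdist_lt => e e0.
have [k0 _ near_k0] := p_clus _ (exprn_gt0 2 e0) 0%N.
exists k0 => // k /= k0k; rewrite distrC normr_lt_dotp //.
exact: le_lt_trans (sqdist_nonincreasing gp k0k) near_k0.
Qed.

End FejerConvergence.

Lemma beta_gap_gt0 (R : realType) (nu beta : R) : 0 < nu -> nu < 1 ->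
  (1 - Num.sqrt (1 - nu ^+ 2)) / nu ^+ 2 < beta -> beta <= 1 ->
  0 < 2 * beta - 1 - beta ^+ 2 * nu ^+ 2.
Proof.
move=> nu0 nu1; have nu20 : 0 < nu ^+ 2 by rewrite exprn_gt0.
rewrite ltr_pdivrMr // => beta_lb beta1.
set s := Num.sqrt _ in beta_lb.
have nu21 : nu ^+ 2 < 1 by rewrite expr2; nra.
have s0 : 0 <= s := sqrtr_ge0 _.
have s2 : s ^+ 2 = 1 - nu ^+ 2 by rewrite sqr_sqrtr // subr_ge0 ltW.
(* nu^2 (2 beta - 1 - beta^2 nu^2) = (1 + s - beta nu^2) (beta nu^2 - 1 + s),
   and both factors are positive. *)
have : 0 < (1 + s - beta * nu ^+ 2) * (beta * nu ^+ 2 - 1 + s).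
  by rewrite mulr_gt0 //; nra.
have -> : (1 + s - beta * nu ^+ 2) * (beta * nu ^+ 2 - 1 + s) =
  nu ^+ 2 * (2 * beta - 1 - beta ^+ 2 * nu ^+ 2) by rewrite -[s ^+ 2]/(s * s) in s2; nra.
by rewrite pmulr_rgt0.
Qed.

(* Write P = x - x*, d = h grad f(x) and e = h (grad f(x) - grad f(z)), so that
   the new iterate minus x* is P - d + beta e, and z - x* = P - d. *)
Lemma relaxed_step_sqr_le (R : realType) n (P d e : 'rV[R]_n) (b nu : R) :
  0 <= b -> b <= 1 -> 0 <= dotp P d -> 0 <= dotp (d - e) (P - d) ->
  dotp e e <= nu ^+ 2 * dotp d d ->
  dotp (P - d + b *: e) (P - d + b *: e) <=
    dotp P P - (2 * b - 1 - b ^+ 2 * nu ^+ 2) * dotp d d.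
Proof.
move=> b0 b1 Pd de ee.
rewrite !(dotpDl, dotpDr, dotpNl, dotpNr, dotpZl, dotpZr) in de *.
rewrite (dotpC d P) (dotpC e P) (dotpC e d) in de *.
have : 0 <= (1 - b) * dotp P d by rewrite mulr_ge0 // subr_ge0.
have : 0 <= b * (dotp P d - dotp d d - dotp P e + dotp d e) by rewrite mulr_ge0 //; lra.
have : 0 <= b ^+ 2 * (nu ^+ 2 * dotp d d - dotp e e) by rewrite mulr_ge0 ?sqr_ge0 ?subr_ge0.
nra.
Qed.

Section Alg2Step.
Variables (R : realType) (n : nat) (g : 'rV[R]_n -> 'rV[R]_n) (L : R).
Hypothesis g_lip : forall p q, enorm (g p - g q) <= L * enorm (p - q).
Variables (mu nu hlo hup theta tau beta : R).
Hypotheses (nu_gt0 : 0 < nu) (nu_lt1 : nu < 1) (theta_gt0 : 0 < theta)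
  (hlo_gt0 : 0 < hlo).

Let Lp := Num.max L 1.

Let Lp_gt0 : 0 < Lp.
Proof. by rewrite lt_max ltr01 orbT. Qed.

Lemma enorm_zpt_gt0 x gam : 0 < gam -> g x != 0 -> 0 < enorm (zpt g x gam - x).
Proof.
move=> gam0 gx; rewrite lt_neqAle enorm_ge0 andbT eq_sym -sqrf_eq0 enorm_sqr.
by rewrite dotp_eq0 /zpt addrAC subrr add0r oppr_eq0 scaler_eq0 gt_eqF.
Qed.

Lemma rk_le x gam : 0 < gam -> g x != 0 -> rk g x gam <= gam * Lp.
Proof.
move=> gam0 gx; rewrite /rk ler_pdivrMr ?enorm_zpt_gt0 // -mulrA ler_pM2l //.
by apply: le_trans (g_lip _ _) _; rewrite ler_wpM2r ?enorm_ge0 // le_max lexx.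
Qed.

Definition hmin := Num.min hlo (theta * nu / Lp).

Lemma hmin_gt0 : 0 < hmin.
Proof. by rewrite lt_min hlo_gt0 !mulr_gt0 ?invr_gt0. Qed.

(* A rejected trial step gamma has nu < r(gamma) <= gamma Lp, so the next trial
   step theta min (gamma, gamma / r(gamma)) is at least theta nu / Lp. *)
Lemma trial_ge_hmin x g0 l : g x != 0 -> hlo <= g0 ->
  (forall j, (j < l)%N -> nu < rk g x (trial g theta x g0 j)) ->
  hmin <= trial g theta x g0 l.
Proof.
move=> gx g0_ge; elim: l => [|l IH] rejected; first by rewrite ge_min g0_ge.
have t_ge := IH (fun j jl => rejected j (ltnW jl)).
have r_gt := rejected l (ltnSn l).
set t := trial g theta x g0 l in t_ge r_gt *.
have t0 : 0 < t := lt_le_trans hmin_gt0 t_ge.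
have r_le := rk_le t0 gx.
set r := rk g x t in r_gt r_le *.
have r0 : 0 < r := lt_trans nu_gt0 r_gt.
have -> : trial g theta x g0 l.+1 = theta * Num.min t (t / r).
  by rewrite /= -/t -/r mulrAC mulrC minr_pMr ?ltW // mulr1 mul1r.
rewrite ge_min -mulrA ler_pM2l // le_min; apply/orP; right; apply/andP; split.
  by rewrite ler_pdivrMr //; apply: le_trans (ltW r_gt) r_le.
rewrite ler_pdivlMr // mulrAC ler_pdivrMr //.
by apply: le_trans r_le; rewrite ler_piMl ?ltW.
Qed.

Hypotheses (beta_ge0 : 0 <= beta) (beta_le1 : beta <= 1).
Hypothesis g_pseudomonotone :
  forall p q, 0 <= dotp (g p) (q - p) -> 0 <= dotp (g q) (q - p).

Lemma alg2_step_sqdist_decrease xs xk g0k xk1 g0k1 :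
  g xs = 0 -> g xk != 0 -> hlo <= g0k ->
  alg2_step g mu nu hlo hup theta tau beta xk g0k xk1 g0k1 ->
  0 <= 2 * beta - 1 - beta ^+ 2 * nu ^+ 2 ->
  sqdist xk1 xs + (2 * beta - 1 - beta ^+ 2 * nu ^+ 2) * hmin ^+ 2 *
    dotp (g xk) (g xk) <= sqdist xk xs.
Proof.
move=> gxs gx g0k_ge [l [r_le rejected -> _]] gap0.
set h := trial g theta xk g0k l in r_le *.
have h_ge : hmin <= h := trial_ge_hmin gx g0k_ge rejected.
have h0 : 0 < h := lt_le_trans hmin_gt0 h_ge.
set z := zpt g xk h; set d := h *: g xk; set e := h *: (g xk - g z).
have ref_grad y : 0 <= dotp (g y) (y - xs).
  by apply: g_pseudomonotone; rewrite gxs dotp0l.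
have step_le : sqdist (xk - d + beta *: e) xs <=
    sqdist xk xs - (2 * beta - 1 - beta ^+ 2 * nu ^+ 2) * dotp d d.
  rewrite /sqdist; have -> : xk - d + beta *: e - xs = (xk - xs) - d + beta *: e.
    by apply/rowP => i; rewrite !mxE; ring.
  apply: relaxed_step_sqr_le => //.
  - by rewrite dotpC /d dotpZl; exact: mulr_ge0 (ltW h0) (ref_grad xk).
  - have -> : d - e = h *: g z by apply/rowP => i; rewrite !mxE; ring.
    have -> : xk - xs - d = z - xs by apply/rowP => i; rewrite !mxE; ring.
    by rewrite dotpZl; exact: mulr_ge0 (ltW h0) (ref_grad z).
  - rewrite /rk -/z ler_pdivrMr ?enorm_zpt_gt0 // in r_le.
    have lhs_ge0 : 0 <= h * enorm (g z - g xk) by rewrite mulr_ge0 ?enorm_ge0 ?ltW.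
    have := ler_pM lhs_ge0 lhs_ge0 r_le r_le; rewrite -!expr2 !exprMn !enorm_sqr.
    have -> : z - xk = - d by apply/rowP => i; rewrite !mxE; ring.
    rewrite /e /d !(dotpZl, dotpZr, dotpNl, dotpNr) dotp_sqrBC; lra.
have -> : xk - h *: (g xk - beta *: (g xk - g z)) = xk - d + beta *: e.
  by apply/rowP => i; rewrite !mxE; ring.
have : hmin ^+ 2 * dotp (g xk) (g xk) <= dotp d d.
  rewrite /d dotpZl dotpZr mulrA -expr2 ler_wpM2r ?dotp_ge0 //.
  by rewrite !expr2; have := hmin_gt0; nra.
move: step_le; rewrite -mulrA; nra.
Qed.

Lemma alg2_step_gam0_ge xk g0k xk1 g0k1 :
  alg2_step g mu nu hlo hup theta tau beta xk g0k xk1 g0k1 -> hlo <= g0k1.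
Proof. by move=> [l [_ _ _ ->]]; case: ifP => _; rewrite le_max lexx. Qed.

End Alg2Step.

Theorem theorem3 (R : realType) (n : nat)
  (f : 'rV[R]_n -> R) (g : 'rV[R]_n -> 'rV[R]_n) (L : R)
  (mu nu hlo hup theta tau beta : R)
  (x : nat -> 'rV[R]_n) (gam0 : nat -> R) :
  (forall p, differentiable f p /\ forall v, 'd f p v = dotp (g p) v) ->
  (forall p q, enorm (g p - g q) <= L * enorm (p - q)) ->
  (forall p q, 0 <= dotp (g p) (q - p) -> 0 <= dotp (g q) (q - p)) ->
  (exists p, g p = 0) ->
  0 < mu -> mu < nu -> nu < 1 ->
  0 < hlo -> hlo < 1 -> 1 <= gam0 0%N -> gam0 0%N <= hup ->
  0 < theta -> theta < 1 -> 1 < tau ->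
  (1 - Num.sqrt (1 - nu ^+ 2)) / nu ^+ 2 < beta -> beta <= 1 ->
  (forall k, alg2_step g mu nu hlo hup theta tau beta
               (x k) (gam0 k) (x k.+1) (gam0 k.+1)) ->
  (forall k, g (x k) != 0) ->
  exists xs, g xs = 0 /\ x @ \oo --> xs.
Proof.
(* Only the gradient map enters the argument; f, hup, tau and theta < 1 do not. *)
move=> _ g_lip g_pmono X_ne mu0 mu_nu nu1 hlo0 hlo1 gam00 _ theta0 _ _
  beta_lb beta1 step g_ne0.
have nu0 : 0 < nu := lt_trans mu0 mu_nu.
have gap0 := beta_gap_gt0 nu0 nu1 beta_lb beta1.
have beta0 : 0 <= beta by have := sqr_ge0 (beta * nu); rewrite exprMn; lra.
have gam0_ge k : hlo <= gam0 k.
  by case: k => [|k]; [lra | exact: alg2_step_gam0_ge (step k)].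
apply: (@fejer_cvg _ _ _ (Num.max L 1 ^+ 2)
  ((2 * beta - 1 - beta ^+ 2 * nu ^+ 2) * hmin L nu hlo theta ^+ 2)) => //.
- by rewrite exprn_gt0 // lt_max ltr01 orbT.
- by rewrite mulr_gt0 // exprn_gt0 // hmin_gt0.
- exact: sqdist_lipschitz.
- move=> p gp k; apply: (alg2_step_sqdist_decrease g_lip nu0 nu1 theta0 hlo0
    beta0 beta1 g_pmono gp (g_ne0 k) (gam0_ge k) (step k) (ltW gap0)).
Qed.
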